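(* For every class of graphs $\mathcal{G}$, $\operatorname{rtw}(\widehat{\mathcal{G}})\leq \max(\operatorname{rtw}(\mathcal{G}),1)$.
   Context: A class of graphs is a collection of graphs closed under isomorphism. For a class $\mathcal{G}$, $\widehat{\mathcal{G}}$ denotes the class of graphs $G$ for which there exists a set $Z\subseteq V(G)$ of vertices each of degree exactly $1$ in $G$ such that $G-Z\in\mathcal{G}$. The strong product $H\boxtimes P$ has vertex set $V(H)\times V(P)$, distinct pairs adjacent if adjacent or equal in each coordinate. The row treewidth $\operatorname{rtw}(G)$ of a graph $G$ is the minimum $b$ such that there is a graph $H$ with treewidth at most $b$ and a path $P$ with $G$ isomorphic to a subgraph of $H\boxtimes P$. The row treewidth $\operatorname{rtw}(\mathcal{G})$ of a class is the maximum row treewidth of a graph in $\mathcal{G}$, or $\infty$ if no maximum exists. *)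

From mathcomp Require Import all_boot.
Set Implicit Arguments. Unset Strict Implicit. Unset Printing Implicit Defensive.

Record graph := Graph {
  gV : finType;
  gE : rel gV;
  gE_sym : symmetric gE;
  gE_irr : irreflexive gE }.

Definition isomorphic (G G' : graph) : Prop :=
  exists f : gV G -> gV G', bijective f /\ forall x y, gE x y = gE (f x) (f y).

Definition graph_class (C : graph -> Prop) : Prop :=
  forall G G', isomorphic G G' -> C G -> C G'.

Section Delete.
Variables (G : graph) (Z : {set gV G}).
Definition del_V := {x : gV G | x \notin Z}.
Definition del_E : rel del_V := fun x y => gE (val x) (val y).
Lemma del_E_sym : symmetric del_E.
Proof. by move=> x y; rewrite /del_E gE_sym. Qed.
Lemma del_E_irr : irreflexive del_E.
Proof. by move=> x; rewrite /del_E gE_irr. Qed.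
Definition delete_vertices : graph := Graph del_E_sym del_E_irr.
End Delete.

Definition degree (G : graph) (v : gV G) : nat := #|[set w | gE v w]|.

Definition hat_class (C : graph -> Prop) (G : graph) : Prop :=
  exists Z : {set gV G}, (forall z, z \in Z -> degree z = 1) /\ C (delete_vertices Z).

Definition is_tree (T : graph) : Prop :=
  0 < #|gV T| /\
  (forall x y : gV T, connect (@gE T) x y) /\
  (forall c : seq (gV T), uniq c -> 2 < size c -> ~~ cycle (@gE T) c).

Definition connected_in (T : graph) (S : {set gV T}) : Prop :=
  forall x y, x \in S -> y \in S ->
    connect [rel u v | [&& gE u v, u \in S & v \in S]] x y.

Definition tree_decomposition (G T : graph) (B : gV T -> {set gV G}) : Prop :=
  is_tree T /\
  (forall v : gV G, exists t, v \in B t) /\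
  (forall v w : gV G, gE v w -> exists t, (v \in B t) && (w \in B t)) /\
  (forall v : gV G, connected_in [set t | v \in B t]).

Definition tw_le (G : graph) (b : nat) : Prop :=
  exists (T : graph) (B : gV T -> {set gV G}),
    tree_decomposition B /\ forall t, #|B t| <= b.+1.

Definition path_rel (n : nat) : rel 'I_n.+1 :=
  fun i j => (i.+1 == j :> nat) || (j.+1 == i :> nat).

Definition strong_rel (H : graph) (n : nat) : rel (gV H * 'I_n.+1) :=
  fun p q => [&& p != q, (p.1 == q.1) || gE p.1 q.1 & (p.2 == q.2) || path_rel p.2 q.2].

Definition subgraph_of (G : graph) (U : Type) (e : rel U) : Prop :=
  exists f : gV G -> U, injective f /\ forall x y, gE x y -> e (f x) (f y).

Definition rtw_le (G : graph) (b : nat) : Prop :=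
  exists (H : graph) (n : nat), tw_le H b /\ subgraph_of G (@strong_rel H n).

Definition class_rtw_le (C : graph -> Prop) (b : nat) : Prop :=
  forall G, C G -> rtw_le G b.

(* Let G - Z embed in H ⊠ P with tw(H) <= b, where every vertex of Z has degree 1.  A vertex z
   of Z either hangs off a vertex y outside Z, or forms an isolated edge with another vertex of Z.
   Add z as a new vertex of H, adjacent to the H-coordinate of y (its anchor) in the first case and
   to its partner in the second, and put it in the row of y (resp. row 0).  A tree decomposition of
   the new host graph is obtained by hanging, off a bag containing the anchor, a leaf bag holding z
   with its anchor or partner; these new bags have size 2, so the width becomes max(b, 1). *)

From mathcomp Require Import all_boot.
Set Implicit Arguments. Unset Strict Implicit. Unset Printing Implicit Defensive.

Lemma homo_connect (A B : finType) (e : rel A) (e' : rel B) (h : A -> B) :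
  {homo h : x y / e x y >-> e' x y} ->
  {homo h : x y / connect e x y >-> connect e' x y}.
Proof.
move=> he x _ /connectP [q eq ->]; elim: q x eq => [|y q IHq] x /=; first by rewrite connect0.
by case/andP=> /he exy /IHq; apply: connect_trans (connect1 exy).
Qed.

Lemma in_setU_imset_inl (A B : finType) (S : {set A}) (L : {set B}) a :
  (inl a \in inl @: S :|: inr @: L) = (a \in S).
Proof.
have nL : inl a \notin inr @: L by apply/imsetP => -[].
by rewrite in_setU (negbTE nL) orbF (mem_imset _ _ inl_inj).
Qed.

Lemma in_setU_imset_inr (A B : finType) (S : {set A}) (L : {set B}) x :
  (inr x \in inl @: S :|: inr @: L) = (x \in L).
Proof.
have nS : inr x \notin inl @: S by apply/imsetP => -[].
by rewrite in_setU (negbTE nS) (mem_imset _ _ inr_inj).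
Qed.

Lemma connected_in_set1 (T : graph) (t : gV T) : connected_in [set t].
Proof. by move=> x y /set1P -> /set1P ->; exact: connect0. Qed.

Section LeafGraph.
Variables (T : graph) (X : finType) (p : X -> gV T).

Definition leaf_rel : rel (gV T + X) := fun u v =>
  match u, v with
  | inl a, inl b => gE a b
  | inl a, inr x | inr x, inl a => p x == a
  | inr _, inr _ => false
  end.

Lemma leaf_rel_sym : symmetric leaf_rel.
Proof. by case=> [a|x] [b|y] //=; apply: gE_sym. Qed.

Lemma leaf_rel_irr : irreflexive leaf_rel.
Proof. by case=> [a|x] //=; apply: gE_irr. Qed.

Definition leaf_graph := Graph leaf_rel_sym leaf_rel_irr.

Lemma leaf_graph_connect :
  (forall a b : gV T, connect (@gE T) a b) ->
  forall u v : gV leaf_graph, connect (@gE _) u v.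
Proof.
move=> conn.
have inl_conn a b : connect leaf_rel (inl a) (inl b).
  by apply: (homo_connect (h := inl)) (conn a b).
have sym := sym_connect_sym leaf_rel_sym.
suff to_inl u : exists a, connect leaf_rel u (inl a).
  move=> u v; case: (to_inl u) (to_inl v) => a ua [b vb].
  by apply: connect_trans ua _; rewrite sym; apply: connect_trans vb (inl_conn _ _).
by case: u => [a|x]; [exists a; exact: connect0 | exists (p x); apply: connect1 => /=].
Qed.

Lemma leaf_notin_cycle (x : X) (c : seq (gV leaf_graph)) :
  inr x \in c -> uniq c -> 2 < size c -> ~~ cycle leaf_rel c.
Proof.
move=> xc uc sc; apply/negP => cyc.
case: (rot_to xc) => i s rs.
have : cycle leaf_rel (inr x :: s) by rewrite -rs rot_cycle.
have : uniq (inr x :: s) by rewrite -rs rot_uniq.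
have : 2 < size (inr x :: s) by rewrite -rs size_rot.
(* both neighbours of [inr x] on the cycle must be its unique neighbour [inl (p x)] *)
case: s {rs} => [|u [|v s]] // _ /and3P [_ u_v _].
rewrite /= rcons_path /= => /and4P [xu _ _ lx].
move: (mem_last v s) u_v xu lx.
case: u => [a|//]; case: (last v s) => [b|//] /= b_vs a_vs /eqP pa /eqP pb.
by rewrite -pa pb b_vs in a_vs.
Qed.

Lemma leaf_graph_acyclic :
  (forall c : seq (gV T), uniq c -> 2 < size c -> ~~ cycle (@gE T) c) ->
  forall c : seq (gV leaf_graph), uniq c -> 2 < size c -> ~~ cycle (@gE _) c.
Proof.
move=> acyc c uc sc.
case: (boolP (has (fun u => if u is inr _ then true else false) c)).
  by case/hasP => [[//|x] xc _]; exact: leaf_notin_cycle xc uc sc.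
rewrite -all_predC => all_inl.
set s := pmap (fun u => if u is inl a then Some a else None) c.
have c_inl : c = map inl s.
  by rewrite /s; elim: c all_inl {uc sc s} => [|[a|x] c IHc] //= /IHc <-.
move: uc sc; rewrite c_inl (map_inj_uniq inl_inj) size_map cycle_map; exact: acyc.
Qed.

Lemma leaf_graph_tree : is_tree T -> is_tree leaf_graph.
Proof.
case=> [ne [conn acyc]]; split; last split.
- by rewrite /= card_sum ltn_addr.
- exact: leaf_graph_connect.
- exact: leaf_graph_acyclic.
Qed.

Lemma leaf_graph_connected_in (S : {set gV T}) (L : {set X}) :
  connected_in S -> {in L, forall x, p x \in S} ->
  connected_in (inl @: S :|: inr @: L : {set gV leaf_graph}).
Proof.
move=> conS pL; set S' := _ :|: _.
pose R := [rel u v : gV leaf_graph | [&& gE u v, u \in S' & v \in S']].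
have inlS a : (inl a \in S') = (a \in S) by exact: in_setU_imset_inl.
have inrL x : (inr x \in S') = (x \in L) by exact: in_setU_imset_inr.
have symR : connect_sym R.
  by apply: sym_connect_sym => u v /=; rewrite leaf_rel_sym; congr andb; exact: andbC.
have inl_conn a b : a \in S -> b \in S -> connect R (inl a) (inl b).
  move=> aS bS; apply: homo_connect (conS a b aS bS) => s t /and3P [st sS tS].
  by rewrite /= st !inlS sS tS.
suff to_inl u : u \in S' -> exists2 a, a \in S & connect R u (inl a).
  move=> u v /to_inl [a aS ua] /to_inl [b bS vb].
  by apply: connect_trans ua _; rewrite symR; apply: connect_trans vb (inl_conn _ _ _ _).
case: u => [a|x]; first by rewrite inlS => aS; exists a => //; exact: connect0.
rewrite inrL => xL; exists (p x); first exact: pL.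
by apply: connect1; rewrite /= eqxx inrL inlS xL pL.
Qed.

End LeafGraph.

Lemma strong_rel_sym (H : graph) (n : nat) : symmetric (@strong_rel H n).
Proof.
have path_sym (i j : 'I_n.+1) : path_rel i j = path_rel j i by rewrite /path_rel orbC.
move=> p q; rewrite /strong_rel eq_sym [q.1 == _]eq_sym [q.2 == _]eq_sym gE_sym.
by rewrite path_sym.
Qed.

Lemma strong_rel_row (H : graph) (n : nat) (a b : gV H) (i : 'I_n.+1) :
  gE a b -> strong_rel (a, i) (b, i).
Proof.
move=> ab; rewrite /strong_rel /= ab eqxx orbT andbT xpair_eqE negb_and.
by apply/orP; left; apply: contraTneq ab => ->; rewrite gE_irr.
Qed.

Lemma strong_rel_map (H H' : graph) (n : nat) (h : gV H -> gV H') :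
  injective h -> {homo h : a b / gE a b} ->
  forall p q, strong_rel p q -> @strong_rel H' n (h p.1, p.2) (h q.1, q.2).
Proof.
move=> h_inj hE [a i] [b j] /and3P [pq ab ij]; apply/and3P; split => //=.
- by move: pq; rewrite !xpair_eqE (inj_eq h_inj).
- by rewrite (inj_eq h_inj); case/orP: ab => [->|/hE ->]; rewrite ?orbT.
Qed.

Section HatEmbedding.
Variables (G : graph) (Z : {set gV G}).
Hypothesis deg1 : forall z, z \in Z -> degree z = 1.
Variables (H : graph) (n : nat) (f : gV (delete_vertices Z) -> gV H * 'I_n.+1).
Hypothesis f_inj : injective f.
Hypothesis f_edge : forall x y, gE x y -> strong_rel (f x) (f y).

Definition neighbour (z : gV G) : option (gV G) := [pick w | gE z w].

Lemma neighbour_edge z y : neighbour z = Some y -> gE z y.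
Proof. by rewrite /neighbour; case: pickP => // w zw [<-]. Qed.

Lemma neighbour_unique z y : z \in Z -> gE z y -> neighbour z = Some y.
Proof.
move=> zZ zy.
have /cards1P [w Nz] : #|[set w | gE z w]| == 1 by rewrite -/(degree z) deg1.
have eqNz w' : gE z w' -> w' = w by move=> zw'; apply/set1P; rewrite -Nz inE.
rewrite /neighbour (eqNz y zy); case: pickP => [w' /eqNz -> // | /(_ w)].
by rewrite -(eqNz y zy) zy.
Qed.

Definition coords (x : gV G) : option (gV H * 'I_n.+1) :=
  omap f (insub x : option (del_V Z)).

Lemma coords_eq_None x : (coords x == None) = (x \in Z).
Proof. by rewrite /coords; case: insubP => [w /negbTE -> //|/negbNE ->]. Qed.

Lemma coords_inj x y p : coords x = Some p -> coords y = Some p -> x = y.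
Proof.
rewrite /coords; case: insubP => // w _ <- [<-]; case: insubP => // w' _ <- [].
by move/f_inj ->.
Qed.

Lemma coords_edge x y p q :
  coords x = Some p -> coords y = Some q -> gE x y -> strong_rel p q.
Proof.
rewrite /coords; case: insubP => // w _ <- [<-]; case: insubP => // w' _ <- [<-].
exact: f_edge.
Qed.

Definition anchor (z : gV G) : option (gV H) :=
  omap fst (obind coords (neighbour z)).

Definition row (z : gV G) : 'I_n.+1 :=
  odflt ord0 (omap snd (obind coords (neighbour z))).

(* Both ends of an edge component [{y, z}] of [Z] are owned by the end of smaller rank, whose leaf
   bag then holds the edge [inr y -- inr z] of [host]. *)
Definition owner (z : gV G) : gV G :=
  if neighbour z is Some y then
    if [&& z \in Z, y \in Z & enum_rank y < enum_rank z] then y else z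
  else z.

Definition host_rel : rel (gV H + gV G) := fun u v =>
  match u, v with
  | inl a, inl b => gE a b
  | inl a, inr z | inr z, inl a => anchor z == Some a
  | inr z, inr y => (z != y) && (owner z == owner y)
  end.

Lemma host_rel_sym : symmetric host_rel.
Proof. by case=> [a|z] [b|y] //=; [apply: gE_sym | rewrite eq_sym [owner y == _]eq_sym]. Qed.

Lemma host_rel_irr : irreflexive host_rel.
Proof. by case=> [a|z] //=; [apply: gE_irr | rewrite eqxx]. Qed.

Definition host := Graph host_rel_sym host_rel_irr.

Definition embed (z : gV G) : gV host * 'I_n.+1 :=
  if coords z is Some (a, i) then (inl a, i) else (inr z, row z).

Lemma embed_inj : injective embed.
Proof.
move=> x y; rewrite /embed.
case ex: (coords x) => [[a i]|]; case ey: (coords y) => [[b j]|] //; last by case.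
by case=> ab ij; apply: (coords_inj ex); rewrite ey ab ij.
Qed.

Lemma embed_edge_leaf x y :
  x \in Z -> y \notin Z -> gE x y -> strong_rel (embed x) (embed y).
Proof.
rewrite -coords_eq_None => /eqP ex.
case ey: (coords y) => [[a i]|]; last by rewrite -coords_eq_None ey.
move=> _ xy.
have Nx : neighbour x = Some y by apply: neighbour_unique; rewrite // -coords_eq_None ex.
rewrite /embed ex ey /row /= Nx /= ey /=.
by apply: strong_rel_row; rewrite /= /anchor Nx /= ey.
Qed.

Lemma owner_edge x y : x \in Z -> y \in Z -> gE x y -> owner x = owner y.
Proof.
move=> xZ yZ xy; have yx : gE y x by rewrite gE_sym.
have nxy : x != y by apply: contraTneq xy => ->; rewrite gE_irr.
rewrite /owner (neighbour_unique xZ xy) (neighbour_unique yZ yx) xZ yZ /=.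
case: ltngtP => // /val_inj /enum_rank_inj eq_yx.
by rewrite eq_yx eqxx in nxy.
Qed.

Lemma embed_edge x y : gE x y -> strong_rel (embed x) (embed y).
Proof.
move=> xy; have yx : gE y x by rewrite gE_sym.
case: (boolP (x \in Z)) => xZ; case: (boolP (y \in Z)) => yZ.
- have Nx := neighbour_unique xZ xy; have Ny := neighbour_unique yZ yx.
  move: (xZ) (yZ); rewrite -!coords_eq_None => /eqP ex /eqP ey.
  rewrite /embed ex ey /row Nx Ny /= ex ey /=; apply: strong_rel_row => /=.
  by rewrite (owner_edge xZ yZ xy) eqxx andbT; apply: contraTneq xy => ->; rewrite gE_irr.
- exact: embed_edge_leaf.
- by rewrite strong_rel_sym; apply: embed_edge_leaf.
- case ex: (coords x) (xZ) => [p|]; last by rewrite -coords_eq_None ex.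
  case ey: (coords y) (yZ) => [q|]; last by rewrite -coords_eq_None ey.
  rewrite /embed ex ey; case: p ex => a i ex; case: q ey => b j ey _ _.
  have inl_edge (c d : gV H) : gE c d -> @gE host (inl c) (inl d) by [].
  exact: (strong_rel_map (H' := host) inl_inj inl_edge (coords_edge ex ey xy)).
Qed.

Variables (b : nat) (T : graph) (B : gV T -> {set gV H}) (t0 : gV T).
Hypothesis tdB : tree_decomposition B.
Hypothesis widthB : forall t, #|B t| <= b.+1.

Lemma anchor_owner z a : anchor z = Some a -> owner z = z.
Proof.
rewrite /anchor /owner; case: (neighbour z) => //= y.
by case: ifP => // /and3P [_ yZ _]; move: yZ; rewrite -coords_eq_None => /eqP ->.
Qed.

Definition anchor_node (z : gV G) : gV T :=
  if anchor z is Some a then odflt t0 [pick t | a \in B t] else t0.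

Lemma anchor_node_bag z a : anchor z = Some a -> a \in B (anchor_node z).
Proof.
rewrite /anchor_node => ->; case: pickP => [t //|none].
by case: tdB => _ [/(_ a) [t ta] _]; move: (none t); rewrite ta.
Qed.

Definition host_tree := leaf_graph anchor_node.

Definition host_bag (u : gV host_tree) : {set gV host} :=
  match u with
  | inl t => inl @: B t
  | inr w => [set v | match v with inl a => anchor w == Some a | inr z => owner z == w end]
  end.

Lemma owner_neq z : owner z != z -> [/\ z \in Z, owner z \in Z & gE z (owner z)].
Proof.
rewrite /owner; case Nz: (neighbour z) => [y|]; last by rewrite eqxx.
by case: ifP => [/and3P [zZ yZ _] _|]; [split => //; exact: neighbour_edge | rewrite eqxx].
Qed.

Lemma host_bag_width u : #|host_bag u| <= (maxn b 1).+1.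
Proof.
case: u => [t|w] /=.
  by rewrite (card_imset _ inl_inj) (leq_trans (widthB t)) // ltnS leq_maxl.
pose partner : gV host :=
  if anchor w is Some a then inl a else if neighbour w is Some y then inr y else inr w.
apply: (@leq_trans #|[set partner; inr w]|); last first.
  by rewrite cards2; case: (_ != _) => //; rewrite ltnS leq_maxr.
apply/subset_leq_card/subsetP => -[a|z]; rewrite !inE.
  by move/eqP => Aw; rewrite /partner Aw eqxx.
case: (eqVneq (owner z) z) => [-> /eqP -> | /owner_neq [zZ wZ zw] /eqP ozw].
  by rewrite eqxx orbT.
have Nw : neighbour (owner z) = Some z by apply: neighbour_unique; rewrite // gE_sym.
have Aw : anchor (owner z) = None.
  by rewrite /anchor Nw /=; move: zZ; rewrite -coords_eq_None => /eqP ->.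
by rewrite /partner -ozw Aw Nw eqxx.
Qed.

Lemma host_bag_inl_nodes h :
  [set u | inl h \in host_bag u] =
    inl @: [set t | h \in B t] :|: inr @: [set w | anchor w == Some h].
Proof.
apply/setP => -[t|w]; rewrite in_set ?in_setU_imset_inl ?in_setU_imset_inr /= ?inE //.
by rewrite (mem_imset _ _ inl_inj).
Qed.

Lemma host_bag_inr_nodes z : [set u | inr z \in host_bag u] = [set inr (owner z)].
Proof.
apply/setP => -[t|w]; rewrite !inE /=.
- by apply/imsetP => -[].
- by rewrite eq_sym.
Qed.

Lemma host_decomposition : tree_decomposition host_bag.
Proof.
case: tdB => treeT [coverB [edgeB connB]].
split; [exact: leaf_graph_tree treeT | split; [|split]].
- case=> [a|z]; last by exists (inr (owner z)); rewrite /= inE.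
  by case: (coverB a) => t ta; exists (inl t); rewrite /= (mem_imset _ _ inl_inj).
- case=> [a|z] [c|y] /=.
  + by case/edgeB => t /andP [ta tc]; exists (inl t); rewrite /= !(mem_imset _ _ inl_inj) ta tc.
  + by move=> /eqP Ay; exists (inr y); rewrite /= !inE Ay (anchor_owner Ay) !eqxx.
  + by move=> /eqP Az; exists (inr z); rewrite /= !inE Az (anchor_owner Az) !eqxx.
  + by case/andP => _ /eqP ozy; exists (inr (owner z)); rewrite /= !inE ozy eqxx.
- case=> [h|z]; last by rewrite host_bag_inr_nodes; exact: connected_in_set1.
  rewrite host_bag_inl_nodes; apply: leaf_graph_connected_in => [|w].
    by apply: connB; exact: (coverB h).
  by rewrite !inE => /eqP /anchor_node_bag.
Qed.

End HatEmbedding.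

Theorem mainTheorem3 (C : graph -> Prop) :
  graph_class C ->
  forall b : nat, class_rtw_le C b -> class_rtw_le (hat_class C) (maxn b 1).
Proof.
move=> _ b rtwC G [Z [deg1 /rtwC [H [n [[T [B [tdB widthB]]] [f [f_inj f_edge]]]]]]].
have [t0 _] : exists t0 : gV T, true by case: tdB => -[/card_gt0P [t _] _] _; exists t.
exists (host f), n; split.
  exists (host_tree f B t0), (fun u => host_bag u).
  by split; [exact: host_decomposition | exact: host_bag_width].
by exists (embed f); split; [exact: embed_inj | exact: embed_edge].
Qed.
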